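(* Let $n\ge 2$ and let $p$ be a strongly 312-avoiding permutation of $\{1,\dots,n\}$ with $p_n=1$. If $p_1>p_2$, then $p$ is the decreasing permutation $n\,(n-1)\cdots 2\,1$.
   Context: Permutations are written in one-line notation $p=p_1\cdots p_n$ with $p_i=p(i)$. $p$ contains a pattern $q=q_1\cdots q_m$ if there are indices $i_1<\cdots<i_m$ with $p_{i_r}<p_{i_s}$ iff $q_r<q_s$; otherwise $p$ avoids $q$. $p^2(i)=p(p(i))$. A permutation $p$ is strongly $q$-avoiding if both $p$ and $p^2$ avoid $q$. *)

From mathcomp Require Import all_boot all_order all_fingroup.
Set Implicit Arguments. Unset Strict Implicit. Unset Printing Implicit Defensive.

(* Permutations of {1..n} are modelled as 'S_n, i.e. permutations of 'I_n =
   {0..n-1}; position i+1 / value v+1 of the paper correspond to i / v here. *)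

Definition contains (n m : nat) (p : 'S_n) (q : 'S_m) : Prop :=
  exists f : 'I_m -> 'I_n,
    (forall r s : 'I_m, r < s -> f r < f s) /\
    (forall r s : 'I_m, (p (f r) < p (f s)) = (q r < q s)).

Definition avoids (n m : nat) (p : 'S_n) (q : 'S_m) : Prop := ~ contains p q.

(* the pattern 312, as a permutation of 'I_3 (0-indexed: 2 0 1) *)
Definition pat312_fun (i : 'I_3) : 'I_3 :=
  match val i with 0 => inord 2 | 1 => inord 0 | _ => inord 1 end.

Lemma pat312_inj : injective pat312_fun.
Proof.
move=> [[|[|[|k]]] Hk] [[|[|[|l]]] Hl] //= H; apply/val_inj => /=;
  move: H; rewrite /pat312_fun /= => /(congr1 val); rewrite /= ?inordK //.
Qed.

Definition pat312 : 'S_3 := perm pat312_inj.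

Definition strongly_avoiding (n m : nat) (p : 'S_n) (q : 'S_m) : Prop :=
  avoids p q /\ avoids (p * p)%g q.

From mathcomp Require Import all_boot all_order all_fingroup zify.
Set Implicit Arguments. Unset Strict Implicit. Unset Printing Implicit Defensive.

(* Let k be the position of the largest value N-1.  Because p avoids 312,
   everything from position k on is decreasing (an ascent j < l after k
   would give the pattern k j l).  If k = 0, p is decreasing everywhere,
   hence the reversal.  Otherwise we exhibit a 312 in p^2, according to how
   the value at position N-2 compares with p(0):
   - if p(N-2) < p(0), then 312-avoidance forces p(N-2) = 1, and the
     positions p^-1(k) < N-2 < N-1 carry the values N-1, p(1), p(0) in p^2;
   - if p(N-2) > p(0), the decreasing tail stays above p(0); a position
     i < k with p(i) in [k, N-2] gives the 312 at positions i < k < N-1 in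
     p^2, and such an i exists since p^-1 cannot map [k, N-2] into
     [k, N-2] minus k (pigeonhole). *)

Lemma contains312 (N : nat) (q : 'S_N) (i j l : 'I_N) :
  i < j -> j < l -> q j < q l -> q l < q i -> contains q pat312.
Proof.
move=> ij jl jl_val li_val.
exists (fun r : 'I_3 => match val r with 0 => i | 1 => j | _ => l end); split.
- by move=> [[|[|[|r]]] ?] [[|[|[|s]]] ?] //= _; lia.
- move=> [[|[|[|r]]] ?] [[|[|[|s]]] ?] //=;
    rewrite /pat312 !permE /pat312_fun /= ?inordK //; lia.
Qed.

Lemma avoid312_decreasing_after_max (N : nat) (p : 'S_N) (k : 'I_N) :
  avoids p pat312 -> (forall x, p x <= p k) ->
  forall j l : 'I_N, k <= j -> j < l -> p l < p j.
Proof.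
move=> avoid_p k_max j l kj jl.
have val_neq (x y : 'I_N) : x != y -> (p x : nat) != p y.
  by apply: contra => /eqP/val_inj/perm_inj ->.
have lk : l != k by apply/eqP => lk; move: kj jl; rewrite lk; lia.
have lj : l != j by apply/eqP => lj; move: jl; rewrite lj ltnn.
have l_below_k : p l < p k by rewrite ltn_neqAle val_neq // k_max.
have [-> // | jk_neq] := eqVneq j k.
have kj_lt : k < j by rewrite ltn_neqAle val_eqE eq_sym jk_neq.
have [// | jl_val | same] := ltngtP (p l) (p j).
- by case: avoid_p; apply: (contains312 kj_lt jl jl_val l_below_k).
- by move: (@val_neq l j lj); rewrite same eqxx.
Qed.

Lemma decreasing_gap (n : nat) (f : 'I_n.+1 -> 'I_n.+1) :
  (forall j l : 'I_n.+1, j < l -> f l < f j) ->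
  forall (t : nat) (j l : 'I_n.+1), l = j + t :> nat -> f l + t <= f j.
Proof.
move=> dec; elim=> [|t IH] j l lE.
  by rewrite addn0 (_ : l = j) //; apply: val_inj; rewrite /= lE addn0.
have l'_lt : j + t < n.+1 by have := ltn_ord l; lia.
have := IH j (Ordinal l'_lt) erefl.
have := dec (Ordinal l'_lt) l; rewrite /= lE => /(_ ltac:(lia)); lia.
Qed.

Lemma decreasing_rev (n : nat) (f : 'I_n.+1 -> 'I_n.+1) :
  (forall j l : 'I_n.+1, j < l -> f l < f j) -> forall i, val (f i) = n - i.
Proof.
move=> dec i.
have upper := @decreasing_gap _ _ dec i ord0 i (esym (add0n _)).
have i_le_n : i + (n - i) = n by have := ltn_ord i; lia.
have lower := @decreasing_gap _ _ dec (n - i) i ord_max (esym i_le_n).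
have := ltn_ord (f ord0); have := ltn_ord (f ord_max); rewrite /=; lia.
Qed.

Lemma perm_imset_not_proper (T : finType) (q : {perm T}) (A : {set T}) (x : T) :
  x \in A -> ~~ (q @: A \subset A :\ x).
Proof.
move=> xA; apply/negP => /subset_leq_card.
by rewrite card_imset ?(cardsD1 x A) ?xA ?add1n ?ltnn //; apply: perm_inj.
Qed.

Section LastValueZero.

Variable n : nat.
Variable p : 'S_n.+2.
Hypothesis avoid_p : avoids p pat312.
Hypothesis last0 : val (p ord_max) = 0.

(* Injectivity of p, phrased on the underlying numbers for use with lia. *)
Let val_neq (x y : 'I_n.+2) : (x : nat) != y -> (p x : nat) != p y.
Proof. by apply: contra => /eqP/val_inj/perm_inj ->. Qed.

Let pos_neq (x y : 'I_n.+2) : (p x : nat) != p y -> (x : nat) != y.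
Proof. by apply: contra => /eqP/val_inj ->. Qed.

Let p_last : p ord_max = ord0.
Proof. exact: val_inj. Qed.

Let p0_pos : 0 < p ord0.
Proof. by have := @val_neq ord0 ord_max; rewrite p_last /=; lia. Qed.

Let top := (p^-1 ord_max)%g.

Let p_top : p top = ord_max.
Proof. by rewrite /top permKV. Qed.

Let tail_dec : forall j l : 'I_n.+2, top <= j -> j < l -> p l < p j.
Proof.
by apply: avoid312_decreasing_after_max => // x; rewrite p_top -ltnS ltn_ord.
Qed.

Lemma rev_of_max_first :
  p ord0 = ord_max -> forall i : 'I_n.+2, val (p i) = n.+1 - i.
Proof.
move=> front; apply: decreasing_rev => j l; apply: tail_dec.
by rewrite (_ : top = ord0) // /top -front permK.
Qed.

Hypothesis not_front : p ord0 != ord_max.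

Let top_nz : (top : nat) != 0.
Proof. by have := @pos_neq top ord0; rewrite p_top; apply; rewrite eq_sym. Qed.

Let p0_lt : p ord0 < n.+1.
Proof.
have : (p ord0 : nat) != n.+1 by apply: contra not_front => /eqP p0; apply/eqP/val_inj.
by have := ltn_ord (p ord0); lia.
Qed.

(* Case p(n) < p(0): the value 1 sits at position n, and p^-1(top) < n < n+1
   carry the values n+1, p(1), p(0) in p^2. *)
Lemma square_312_of_small_before_last :
  p (inord 1) < p ord0 -> p (inord n) < p ord0 -> contains (p * p) pat312.
Proof.
move=> first_desc small; set m : 'I_n.+2 := inord n in small *.
have m_val : m = n :> nat by rewrite /= inordK.
have pm_pos : 0 < p m.
  by have := @val_neq m ord_max; rewrite p_last /= m_val; lia.
have pm_one : p m = 1 :> nat.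
  case: (ltngtP (p m) 1) => [| pm_gt1 | //]; first by lia.
  set o1 := (p^-1 (inord 1))%g.
  have p_o1 : p o1 = 1 :> nat by rewrite /o1 permKV /= inordK.
  have o1_0 : (o1 : nat) != 0 by apply: (@pos_neq o1 ord0); rewrite p_o1; lia.
  have o1_m : (o1 : nat) != m by apply: pos_neq; rewrite p_o1; lia.
  have o1_last : (o1 : nat) != n.+1.
    by apply: (@pos_neq o1 ord_max); rewrite p_o1 p_last.
  have o1_lt : o1 < m by have := ltn_ord o1; rewrite m_val in o1_m *; lia.
  exfalso; apply: avoid_p; apply: (contains312 (i := ord0) (j := o1) (l := m)) => //.
  - by rewrite lt0n.
  - by rewrite p_o1.
have pm_eq : p m = inord 1 by apply: val_inj; rewrite /= pm_one inordK.
set pos := (p^-1 top)%g.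
have p_pos : p pos = top by rewrite /pos permKV.
have top_ne1 : (top : nat) != 1.
  apply/eqP => top1; have top_eq : top = inord 1 by apply: val_inj; rewrite /= top1 inordK.
  by move: first_desc; rewrite -top_eq p_top /=; lia.
have := @pos_neq pos ord_max; have := @pos_neq pos m.
rewrite p_pos p_last pm_one m_val /= => /(_ top_ne1) pos_m /(_ top_nz) pos_last.
apply: (contains312 (i := pos) (j := m) (l := ord_max));
  rewrite ?permM ?p_pos ?p_top ?pm_eq ?p_last //= ?m_val //.
by have := ltn_ord pos; lia.
Qed.

(* Case p(0) < p(n): the decreasing tail from top to n stays above p(0).  A
   position i < top whose value lies in [top, n] gives a 312 at positions
   i < top < n+1 of p^2, with values p(p i) > p(0) > 0; by pigeonhole such
   an i must exist. *)
Lemma square_312_of_large_before_last :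
  p ord0 < p (inord n) -> contains (p * p) pat312.
Proof.
move=> large; set m : 'I_n.+2 := inord n in large.
have m_val : m = n :> nat by rewrite /= inordK.
have above (x : 'I_n.+2) : top <= x -> x <= n -> p ord0 < p x.
  move=> top_x x_n; have [-> // | x_m] := eqVneq x m.
  apply: ltn_trans large (tail_dec top_x _).
  by rewrite ltn_neqAle val_eqE x_m /= m_val.
have top_lt : top < n.+1.
  have := @pos_neq top ord_max; rewrite p_top p_last /= => /(_ isT).
  by have := ltn_ord top; lia.
have [/existsP [i /and3P [i_top top_pi pi_n]] | ] :=
  boolP [exists i : 'I_n.+2, [&& i < top, top <= p i & p i <= n]].
  apply: (contains312 (i := i) (j := top) (l := ord_max));
    rewrite ?permM ?p_top ?p_last //.
  exact: above.
rewrite negb_exists => /forallP early; exfalso.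
set A := [set v : 'I_n.+2 | top <= v <= n].
have top_A : top \in A by rewrite inE leqnn /=; have := ltn_ord top; lia.
apply: (negP (perm_imset_not_proper (p^-1)%g top_A)).
apply/subsetP => x /imsetP [v]; rewrite inE => /andP [top_v v_n] ->.
have p_x : p ((p^-1)%g v) = v by rewrite permKV.
have := early ((p^-1)%g v); rewrite p_x top_v v_n /= andbT -leqNgt => top_x.
have x_top : ((p^-1)%g v : nat) != top by apply: pos_neq; rewrite p_x p_top /=; lia.
have x_last : ((p^-1)%g v : nat) != n.+1.
  by apply: (@pos_neq _ ord_max); rewrite p_x p_last /=; lia.
rewrite !inE top_x -val_eqE x_top /=; have := ltn_ord ((p^-1)%g v); lia.
Qed.

End LastValueZero.

Theorem lemma3p5 (n : nat) (p : 'S_n.+2) :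
  strongly_avoiding p pat312 ->
  val (p ord_max) = 0 ->
  val (p (inord 1)) < val (p ord0) ->
  forall i : 'I_n.+2, val (p i) = n.+1 - val i.
Proof.
move=> [avoid_p avoid_sq] last0 first_desc.
have [front | not_front] := eqVneq (p ord0) ord_max.
  exact: rev_of_max_first.
exfalso; case: (ltngtP (p (inord n)) (p ord0)) => [small | large | same].
- exact: avoid_sq (square_312_of_small_before_last avoid_p last0 not_front first_desc small).
- exact: avoid_sq (square_312_of_large_before_last avoid_p last0 not_front large).
(* n = 0: p is a permutation of {0, 1} ending in 0, so the maximum is first *)
have n0 : n = 0.
  have : inord n = ord0 :> 'I_n.+2 by apply: (@perm_inj _ p); apply: val_inj.
  by move/(congr1 val); rewrite /= inordK.
have p0_max : val (p ord0) = n.+1.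
  have : val (p ord0) != val (p ord_max) by rewrite val_eqE (inj_eq perm_inj).
  by move: n0 last0 (ltn_ord (p ord0)) => /=; lia.
by move/eqP: not_front; apply; apply: val_inj.
Qed.
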